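(* In the standing setting, let $((\psi_n,\alpha_n):n\ge1)$ be a sequence of elements of $\mathcal{A}\times\mathcal{B}$, and for each $n$ fix a lifting $\psi_n^\uparrow$ of $\psi_n$. Set $\circ_0=\cdot$ and, recursively for $n\ge1$, $$g\circ_n h=g\circ_{n-1}\psi_n^{\uparrow}(g)\circ_{n-1}h\circ_{n-1}\overline{\psi_n^{\uparrow}(g)}\circ_{n-1}\alpha_n(g,h),$$ where $\overline{z}$ denotes the inverse of $z$ with respect to $\circ_{n-1}$. Let $\xi_n=\sum_{\emptyset\ne S\subseteq\{1,\dots,n\}}\prod_{j\in S}\psi_j\in\mathcal{A}$ (ring operations of $\mathcal{A}$, each product taken in increasing order of the indices, e.g. $\psi_1\psi_2$ means $\psi_1\circ\psi_2$), so that $\xi_1=\psi_1$ and $\xi_n=\xi_{n-1}+\psi_n+\xi_{n-1}\psi_n$; and let $q_n$ be a lifting of $\xi_n$ (for instance $q_n=\sum_{\emptyset\ne S}\prod_{j\in S}\psi_j^\uparrow$ with pointwise products and compositions of maps). Then for every $n\ge1$ each $\circ_n$ is a well-defined group operation on $G$ and there exists $\beta_n\in\mathcal{B}$ such that for all $g,h\in G$ $$g\circ_n h=g\cdot q_n(g)\cdot h\cdot q_n(g)^{-1}\cdot\beta_n(g,h),$$ i.e. $\circ_n=\circ_{\xi_n,\beta_n}$. In particular $(G,\cdot,\circ_n)$ is a bi-skew brace for all $n\ge 1$.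
   Context: Standing setting: $(G,\cdot)$ is a group, $K$ is a subgroup of $G$ contained in the centre $Z(G)$, and $A$ is a subgroup with $K\le A\le G$ and $A/K$ abelian. Let $\mathcal{A}=\{\psi\in\operatorname{End}(G/K):\psi(G/K)\le A/K\}$; it is a ring with $(\psi+\phi)(x)=\psi(x)\phi(x)$ and $(\psi\phi)(x)=\psi(\phi(x))$. A lifting of $\psi\in\mathcal{A}$ is any set map $\psi^{\uparrow}:G\to A$ with $\psi^{\uparrow}(g)K=\psi(gK)$ for all $g\in G$. Let $\mathcal{B}$ be the set of maps $\alpha:G\times G\to K$ that are bilinear, i.e. $\alpha(gh,k)=\alpha(g,k)\alpha(h,k)$ and $\alpha(g,hk)=\alpha(g,h)\alpha(g,k)$, and satisfy $\alpha(k,g)=\alpha(g,k)=1$ for all $k\in K$, $g\in G$. For $(\psi,\alpha)\in\mathcal{A}\times\mathcal{B}$ define $g\circ_{\psi,\alpha}h=g\cdot\psi^{\uparrow}(g)\cdot h\cdot\psi^{\uparrow}(g)^{-1}\cdot\alpha(g,h)$ (independent of the lifting). A skew brace is a triple $(G,\cdot,\circ)$ where $(G,\cdot)$ and $(G,\circ)$ are groups and $g\circ(h\cdot k)=(g\circ h)\cdot g^{-1}\cdot(g\circ k)$ for all $g,h,k$. A bi-skew brace is a triple $(G,\cdot,\circ)$ such that both $(G,\cdot,\circ)$ and $(G,\circ,\cdot)$ are skew braces. *)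

From Stdlib Require Import List ClassicalEpsilon.
Import ListNotations.
Set Implicit Arguments.

Section Setting.
Variable T : Type.

Definition is_group (o : T -> T -> T) (u : T) (iv : T -> T) : Prop :=
  (forall x y z, o (o x y) z = o x (o y z)) /\
  (forall x, o u x = x /\ o x u = x) /\
  (forall x, o (iv x) x = u /\ o x (iv x) = u).

Definition is_group_op (o : T -> T -> T) : Prop :=
  exists u iv, is_group o u iv.

Definition skew_brace (o1 o2 : T -> T -> T) : Prop :=
  is_group_op o2 /\
  exists u iv, is_group o1 u iv /\
    forall g h k, o2 g (o1 h k) = o1 (o1 (o2 g h) (iv g)) (o2 g k).

Definition bi_skew_brace (o1 o2 : T -> T -> T) : Prop :=
  skew_brace o1 o2 /\ skew_brace o2 o1.

(* inverse of z with respect to an operation o (chosen classically;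
   meaningful when o is a group operation) *)
Definition op_inv (o : T -> T -> T) (z : T) : T :=
  epsilon (inhabits z)
    (fun y => exists u, (forall x, o u x = x /\ o x u = x) /\ o z y = u /\ o y z = u).

Variables (mul : T -> T -> T) (e : T) (inv : T -> T).

Definition is_subgroup (H : T -> Prop) : Prop :=
  H e /\ (forall x y, H x -> H y -> H (mul x y)) /\ (forall x, H x -> H (inv x)).

Definition central (K : T -> Prop) : Prop :=
  forall k g, K k -> mul k g = mul g k.

Variables (K A : T -> Prop).

Definition congK (x y : T) : Prop := K (mul (inv x) y).

Definition abelian_mod (A : T -> Prop) : Prop :=
  forall a b, A a -> A b -> congK (mul a b) (mul b a).

(* f : G -> A is a lifting of an element of
   calA = { psi in End(G/K) | psi(G/K) <= A/K }, namely of gK |-> f(g)K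
   (which must be a well-defined endomorphism of G/K). *)
Definition is_calA_lifting (f : T -> T) : Prop :=
  (forall g, A (f g)) /\
  (forall g k, K k -> congK (f (mul g k)) (f g)) /\
  (forall g h, congK (f (mul g h)) (mul (f g) (f h))).

(* q is a lifting of the element of calA represented by the lifting f *)
Definition lifts (q f : T -> T) : Prop :=
  (forall g, A (q g)) /\ (forall g, congK (q g) (f g)).

Definition is_calB (al : T -> T -> T) : Prop :=
  (forall g h, K (al g h)) /\
  (forall g h k, al (mul g h) k = mul (al g k) (al h k)) /\
  (forall g h k, al g (mul h k) = mul (al g h) (al g k)) /\
  (forall k g, K k -> al k g = e /\ al g k = e).

(* ring operations of calA at the level of representatives *)
Definition fadd (f1 f2 : T -> T) : T -> T := fun x => mul (f1 x) (f2 x).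
Definition fzero : T -> T := fun _ => e.

Fixpoint subsets (l : list nat) : list (list nat) :=
  match l with
  | [] => [[]]
  | x :: l' => map (cons x) (subsets l') ++ subsets l'
  end.

Variable psi : nat -> T -> T.

(* prod_{j in S} psi_j, in increasing index order: psi_{j1} o psi_{j2} o ... *)
Definition prod_psi (S : list nat) : T -> T :=
  fold_right (fun j f => fun x => psi j (f x)) (fun x => x) S.

Definition xi (n : nat) : T -> T :=
  fold_right fadd fzero
    (map prod_psi (filter (fun S => match S with [] => false | _ => true end)
                          (subsets (seq 1 n)))).

Variable alpha : nat -> T -> T -> T.

Fixpoint circ (n : nat) : T -> T -> T :=
  match n with
  | 0 => mul
  | S m => fun g h =>
      let o := circ m in
      o (o (o (o g (psi (S m) g)) h) (op_inv o (psi (S m) g))) (alpha (S m) g h)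
  end.

End Setting.

(* Write λ_g(h) = Q(g) h Q(g)^-1 b(g,h), so that g ∘_{Q,b} h = g λ_g(h).  Because A/K is
   abelian, K is central and b is bilinear and trivial on K, each λ_g is an automorphism of
   (G,·) fixing K, g ↦ λ_g is a homomorphism to Aut(G) factoring through an abelian
   quotient, and λ_{λ_x(y)} = λ_y.  These identities make ∘_{Q,b} a group operation with
   λ_{g ∘ h} = λ_g λ_h, from which both skew brace laws follow.  Moreover, building
   ∘' from ∘_{Q,b} with a further pair (φ, a') gives again an operation of the same shape,
   ∘_{Q',b'} with Q'(g) ≡ φ(g) Q(g) Q(φ(g)) mod K; this is the recursion ξ_n = ξ_{n-1} + ψ_n
   + ξ_{n-1}ψ_n, so induction on n yields ∘_n = ∘_{ξ_n,β_n}.  The choice of lifting is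
   irrelevant because K is central, so conjugation only depends on classes mod K. *)

From Stdlib Require Import List Permutation Setoid Morphisms FunctionalExtensionality ClassicalEpsilon Lia.
Import ListNotations.

Lemma op_inv_group (T : Type) (o : T -> T -> T) u iv :
  is_group o u iv -> forall z, op_inv o z = iv z.
Proof.
  intros [Ho_assoc [Ho_unit Ho_inv]] z. unfold op_inv.
  set (P := fun y => exists u, (forall x, o u x = x /\ o x u = x) /\ o z y = u /\ o y z = u).
  assert (Hex : exists y, P y).
  { exists (iv z), u. split; [exact Ho_unit|]. destruct (Ho_inv z); auto. }
  destruct (epsilon_spec (inhabits z) P Hex) as [u' [Hu' [Hzy Hyz]]].
  set (y := epsilon _ _) in *.
  assert (Eu : u' = u).
  { transitivity (o u' u); [symmetry; apply Ho_unit | apply Hu']. }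
  rewrite Eu in Hzy.
  transitivity (o u y); [symmetry; apply Ho_unit|].
  rewrite <- (proj1 (Ho_inv z)), Ho_assoc, Hzy. apply Ho_unit.
Qed.

Section CentralExtension.
Context (T : Type) (mul : T -> T -> T) (e : T) (inv : T -> T) (K A : T -> Prop).
Hypothesis HG : is_group mul e inv.
Hypothesis HK : is_subgroup mul e inv K.
Hypothesis HKZ : central mul K.
Hypothesis HA : is_subgroup mul e inv A.
Hypothesis HKA : forall x, K x -> A x.
Hypothesis HAab : abelian_mod mul inv K A.

Local Infix "**" := mul (at level 40, left associativity).
Local Notation cK := (congK mul inv K).

Lemma mulgA x y z : x ** y ** z = x ** (y ** z). Proof. apply HG. Qed.
Lemma mul1g x : e ** x = x. Proof. apply HG. Qed.
Lemma mulg1 x : x ** e = x. Proof. apply HG. Qed.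
Lemma mulVg x : inv x ** x = e. Proof. apply HG. Qed.
Lemma mulgV x : x ** inv x = e. Proof. apply HG. Qed.
Lemma mulKg x y : inv x ** (x ** y) = y.
Proof. rewrite <- mulgA, mulVg, mul1g; auto. Qed.
Lemma mulKVg x y : x ** (inv x ** y) = y.
Proof. rewrite <- mulgA, mulgV, mul1g; auto. Qed.
Lemma invg_unique x y : x ** y = e -> y = inv x.
Proof. intro H. rewrite <- (mulKg x y), H, mulg1; auto. Qed.
Lemma invMg x y : inv (x ** y) = inv y ** inv x.
Proof. symmetry; apply invg_unique. rewrite mulgA, mulKVg, mulgV; auto. Qed.
Lemma invgK x : inv (inv x) = x.
Proof. symmetry; apply invg_unique, mulVg. Qed.
Lemma invg1 : inv e = e.
Proof. symmetry; apply invg_unique, mul1g. Qed.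

Ltac gnorm := repeat rewrite ?mulgA, ?mul1g, ?mulg1, ?mulKg, ?mulKVg, ?mulVg, ?mulgV,
                                ?invMg, ?invgK, ?invg1.

Lemma K1 : K e. Proof. apply HK. Qed.
Lemma KM x y : K x -> K y -> K (x ** y). Proof. apply HK. Qed.
Lemma KV x : K x -> K (inv x). Proof. apply HK. Qed.
Lemma A1 : A e. Proof. apply HA. Qed.
Lemma AM x y : A x -> A y -> A (x ** y). Proof. apply HA. Qed.
Lemma AV x : A x -> A (inv x). Proof. apply HA. Qed.
Lemma K_mulC k g : K k -> k ** g = g ** k. Proof. intro; apply HKZ; auto. Qed.
Lemma K_mulCA k g h : K k -> k ** (g ** h) = g ** (k ** h).
Proof. intro. rewrite <- mulgA, (K_mulC k g), mulgA; auto. Qed.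

Lemma congKP x y : cK x y <-> exists k, K k /\ y = x ** k.
Proof.
  split.
  - intro H. exists (inv x ** y); split; auto. rewrite mulKVg; auto.
  - intros [k [Hk ->]]. unfold congK. rewrite mulKg; auto.
Qed.

#[global] Instance congK_Equivalence : Equivalence cK.
Proof.
  split; red; unfold congK.
  - intro x. rewrite mulVg. apply K1.
  - intros x y H. apply KV in H. rewrite invMg, invgK in H; auto.
  - intros x y z H1 H2. pose proof (KM _ _ H1 H2) as H. rewrite mulgA, mulKVg in H; auto.
Qed.

Lemma congK_mulr x k : K k -> cK x (x ** k).
Proof. intro; apply congKP; eauto. Qed.
Lemma congK_K1 k : K k -> cK k e.
Proof. intro. unfold congK. rewrite mulg1. apply KV; auto. Qed.

#[global] Instance mul_congK : Proper (cK ==> cK ==> cK) mul.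
Proof.
  intros x x' Hx y y' Hy.
  apply congKP in Hx as [k [Hk ->]]. apply congKP in Hy as [l [Hl ->]].
  apply congKP. exists (k ** l). split; [apply KM; auto|].
  rewrite !mulgA. f_equal. rewrite K_mulCA; auto.
Qed.

Lemma A_congK x y : cK x y -> A x -> A y.
Proof. intros H Hx. apply congKP in H as [k [Hk ->]]. apply AM; auto. Qed.

Lemma A_commK a b : A a -> A b -> cK (a ** b) (b ** a).
Proof. apply HAab. Qed.

Lemma conj_congK a b h : cK a b -> a ** h ** inv a = b ** h ** inv b.
Proof.
  intro H. apply congKP in H as [k [Hk ->]]. rewrite invMg, !mulgA.
  f_equal. rewrite K_mulCA, mulKVg; auto.
Qed.

Lemma conjA_congK a x : A a -> A x -> cK (a ** x ** inv a) x.
Proof. intros Ha Hx. rewrite (A_commK a x Ha Hx), mulgA, mulgV, mulg1. reflexivity. Qed.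

(* The singleton clause makes [prodl] of a reified product convertible to the product. *)
Fixpoint prodl (l : list T) : T :=
  match l with
  | [] => e
  | [a] => a
  | a :: l' => a ** prodl l'
  end.

Lemma prodl_cons a l : prodl (a :: l) = a ** prodl l.
Proof. destruct l; simpl; auto. rewrite mulg1; auto. Qed.

Lemma Forall_Permutation (P : T -> Prop) l1 l2 :
  Forall P l1 -> Permutation l1 l2 -> Forall P l2.
Proof.
  rewrite !Forall_forall. intros H Hp x Hx. apply H.
  eapply Permutation_in; [symmetry|]; eauto.
Qed.

Lemma prodl_perm_K l1 l2 : Forall K l1 -> Permutation l1 l2 -> prodl l1 = prodl l2.
Proof.
  intros HF Hp. induction Hp.
  - auto.
  - inversion HF; subst. rewrite !prodl_cons. f_equal; auto.
  - inversion HF; subst. inversion H2; subst.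
    rewrite !prodl_cons, <- !mulgA. f_equal. apply K_mulC; auto.
  - rewrite IHHp1; auto. apply IHHp2. eapply Forall_Permutation; eauto.
Qed.

Lemma prodl_perm_A l1 l2 : Forall A l1 -> Permutation l1 l2 -> cK (prodl l1) (prodl l2).
Proof.
  intros HF Hp. induction Hp.
  - reflexivity.
  - inversion HF; subst. rewrite !prodl_cons, IHHp; auto. reflexivity.
  - inversion HF; subst. inversion H2; subst.
    rewrite !prodl_cons, <- !mulgA, (A_commK y x); auto. reflexivity.
  - rewrite IHHp1; auto. apply IHHp2. eapply Forall_Permutation; eauto.
Qed.

Lemma prodl_cancel l l' a :
  Forall K l -> Permutation l (a :: inv a :: l') -> prodl l = prodl l'.
Proof. intros HF Hp. rewrite (prodl_perm_K _ _ HF Hp), !prodl_cons, mulKVg. auto. Qed.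

Create HintDb kdb.
#[local] Hint Resolve K1 KM KV : kdb.

Ltac reify t :=
  match t with
  | ?a ** ?b => let l := reify b in constr:(a :: l)
  | ?a => constr:([a])
  end.

Ltac split_at a r :=
  match r with
  | a :: ?t => constr:((@nil T, t))
  | ?b :: ?t => let p := split_at a t in constr:((b :: fst p, snd p))
  end.

Ltac perm_solve :=
  repeat match goal with
  | |- Permutation [] [] => apply perm_nil
  | |- Permutation (?a :: ?l) ?r =>
      let p := split_at a r in
      let l1 := eval cbn [fst snd] in (fst p) in
      let l2 := eval cbn [fst snd] in (snd p) in
      apply (@Permutation_cons_app T l l1 l2 a); cbn [app]
  end.

Ltac kcancel_r :=
  match goal with |- prodl ?l1 = prodl ?l2 =>
  match l2 with context [inv ?a] =>
    let p := split_at (inv a) l2 in let r1 := eval cbn [fst snd app] in (fst p ++ snd p) in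
    let q := split_at a r1 in let r2 := eval cbn [fst snd app] in (fst q ++ snd q) in
    transitivity (prodl r2);
      [| symmetry; apply (prodl_cancel l2 r2 a);
         [repeat constructor; auto with kdb | perm_solve]]
  end end.
Ltac kcancel_l := symmetry; kcancel_r; symmetry.

(* equality of two products of elements of K, up to reordering and cancelling x, inv x *)
Ltac kperm :=
  repeat rewrite mulgA;
  match goal with |- ?l = ?r =>
    let l1 := reify l in let l2 := reify r in
    change (prodl l1 = prodl l2); repeat kcancel_r; repeat kcancel_l;
    apply prodl_perm_K; [repeat constructor; auto with kdb | perm_solve]
  end.

(* congruence mod K of two products of the same elements of A in different orders *)
Ltac aperm :=
  repeat rewrite mulgA;
  match goal with |- cK ?l ?r =>
    let l1 := reify l in let l2 := reify r in
    change (cK (prodl l1) (prodl l2));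
    apply prodl_perm_A; [repeat constructor; auto with kdb | perm_solve]
  end.

Definition commg x y := x ** y ** inv x ** inv y.

Lemma commg_K x y : A x -> A y -> K (commg x y).
Proof.
  intros Hx Hy. destruct (proj1 (congKP _ _) (A_commK y x Hy Hx)) as [k [Hk Hxy]].
  unfold commg. rewrite Hxy. gnorm. rewrite (K_mulC k); auto. gnorm. auto.
Qed.

Lemma commgC x y : commg x y = inv (commg y x).
Proof. unfold commg. gnorm. auto. Qed.
Lemma comm1g y : commg e y = e.
Proof. unfold commg. gnorm. auto. Qed.
Lemma commg1 y : commg y e = e.
Proof. unfold commg. gnorm. auto. Qed.
Lemma commg_congKl x x' y : cK x x' -> commg x y = commg x' y.
Proof.
  intro H. apply congKP in H as [k [Hk ->]]. unfold commg. gnorm.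
  rewrite (K_mulCA k y); auto. gnorm. auto.
Qed.
Lemma commg_congKr x y y' : cK y y' -> commg x y = commg x y'.
Proof.
  intro H. apply congKP in H as [k [Hk ->]]. unfold commg. gnorm.
  rewrite (K_mulCA k (inv x)); auto. gnorm. auto.
Qed.
Lemma commgMl x x' y : A x -> A x' -> A y -> commg (x ** x') y = commg x' y ** commg x y.
Proof.
  intros Hx Hx' Hy.
  assert (Hmove : forall u R, u ** (y ** (inv u ** R)) = commg u y ** (y ** R)).
  { intros u R. unfold commg. gnorm. auto. }
  unfold commg at 1. gnorm. rewrite Hmove, <- K_mulCA by (apply commg_K; auto).
  unfold commg. gnorm. auto.
Qed.
Lemma commgMr x y y' : A x -> A y -> A y' -> commg x (y ** y') = commg x y ** commg x y'.
Proof.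
  intros Hx Hy Hy'. rewrite !(commgC x), commgMl, invMg; auto.
Qed.

Section CalALifting.
Variable f : T -> T.
Hypothesis Hf : is_calA_lifting mul inv K A f.

Lemma lifting_A x : A (f x). Proof. apply Hf. Qed.
Lemma lifting_morph x y : cK (f (x ** y)) (f x ** f y). Proof. apply Hf. Qed.

Lemma lifting_congK : Proper (cK ==> cK) f.
Proof. intros x y H. apply congKP in H as [k [Hk ->]]. symmetry. apply Hf; auto. Qed.

Lemma lifting1_K : K (f e).
Proof.
  pose proof (lifting_morph e e) as H.
  unfold congK in H. rewrite mul1g, mulKg in H. auto.
Qed.
Lemma lifting_K_congK k : K k -> cK (f k) e.
Proof.
  intro Hk. transitivity (f e).
  - apply lifting_congK, congK_K1; auto.
  - apply congK_K1, lifting1_K.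
Qed.
End CalALifting.

Section CalB.
Variable b : T -> T -> T.
Hypothesis Hb : is_calB mul e K b.

Lemma calB_K g h : K (b g h). Proof. apply Hb. Qed.
Lemma calB_mull g h k : b (g ** h) k = b g k ** b h k. Proof. apply Hb. Qed.
Lemma calB_mulr g h k : b g (h ** k) = b g h ** b g k. Proof. apply Hb. Qed.
Lemma calB_Kl k g : K k -> b k g = e. Proof. intro H; apply (proj2 (proj2 (proj2 Hb)) k g H). Qed.
Lemma calB_Kr k g : K k -> b g k = e. Proof. intro H; apply (proj2 (proj2 (proj2 Hb)) k g H). Qed.
Lemma calB_congKl g g' h : cK g g' -> b g h = b g' h.
Proof.
  intro H. apply congKP in H as [k [Hk ->]]. rewrite calB_mull, (calB_Kl k), mulg1; auto.
Qed.
Lemma calB_congKr g h h' : cK h h' -> b g h = b g h'.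
Proof.
  intro H. apply congKP in H as [k [Hk ->]]. rewrite calB_mulr, (calB_Kr k), mulg1; auto.
Qed.
Lemma calB_invr g h : b g (inv h) = inv (b g h).
Proof. apply invg_unique. rewrite <- calB_mulr, mulgV. apply calB_Kr, K1. Qed.
End CalB.

#[local] Hint Resolve K1 KM KV commg_K calB_K lifting1_K lifting_A AM AV A1 HKA : kdb.

(* move every factor provably in K to the right of its neighbours outside K *)
Ltac floatK :=
  repeat match goal with
  | |- context [?k ** (?x ** ?y)] =>
      let Hk := fresh in assert (Hk : K k) by (auto with kdb);
      tryif (assert (K x) by (auto with kdb)) then fail
      else (rewrite (K_mulCA k x y Hk); clear Hk)
  | |- context [?k ** ?x] =>
      lazymatch x with _ ** _ => fail | _ => idtac end;
      let Hk := fresh in assert (Hk : K k) by (auto with kdb);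
      tryif (assert (K x) by (auto with kdb)) then fail
      else (rewrite (K_mulC k x Hk); clear Hk)
  end.

Ltac strip := repeat match goal with |- ?x ** ?r = ?x ** ?r' => apply (f_equal (mul x)) end.

Definition lambda (Q : T -> T) (b : T -> T -> T) g h := Q g ** h ** inv (Q g) ** b g h.
Definition circ_of (Q : T -> T) (b : T -> T -> T) g h := g ** Q g ** h ** inv (Q g) ** b g h.

Lemma circ_of_congK Q Q' b : (forall g, cK (Q g) (Q' g)) -> circ_of Q b = circ_of Q' b.
Proof.
  intro HQ. extensionality g; extensionality h. unfold circ_of.
  rewrite !(mulgA g), (conj_congK _ _ h (HQ g)). auto.
Qed.

Section Lambda.
Variables (Q : T -> T) (b : T -> T -> T).
Hypothesis HQ : is_calA_lifting mul inv K A Q.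
Hypothesis Hb : is_calB mul e K b.
#[local] Hint Resolve HQ Hb : kdb.
Local Notation lm := (lambda Q b).
Local Notation dt := (circ_of Q b).

Lemma circ_of_lambda g h : dt g h = g ** lm g h.
Proof. unfold circ_of, lambda. gnorm. auto. Qed.

Lemma lambdaM g h h' : lm g (h ** h') = lm g h ** lm g h'.
Proof. unfold lambda. rewrite (calB_mulr b Hb). gnorm. floatK. gnorm. auto. Qed.

Lemma lambdag1 g : lm g e = e.
Proof. unfold lambda. rewrite (calB_Kr b Hb e); auto with kdb. gnorm. auto. Qed.

Lemma lambdaV g h : lm g (inv h) = inv (lm g h).
Proof. apply invg_unique. rewrite <- lambdaM, mulgV. apply lambdag1. Qed.

Lemma lambda_K g k : K k -> lm g k = k.
Proof.
  intro Hk. unfold lambda. rewrite (calB_Kr b Hb k); auto.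
  gnorm. rewrite (K_mulC k); auto. gnorm. auto.
Qed.

Lemma lambda_mul g g' h : lm (g ** g') h = lm g (lm g' h).
Proof.
  unfold lambda. rewrite (conj_congK _ (Q g ** Q g') h (lifting_morph Q HQ g g')).
  rewrite (calB_mull b Hb), !(calB_mulr b Hb), (calB_invr b Hb), (calB_Kr b Hb (b g' h));
    auto with kdb.
  gnorm. floatK. gnorm. strip. kperm.
Qed.

Lemma lambda_mulC g g' h : lm (g ** g') h = lm (g' ** g) h.
Proof.
  assert (HQc : cK (Q (g ** g')) (Q (g' ** g))).
  { rewrite (lifting_morph Q HQ g g'), (lifting_morph Q HQ g' g).
    apply A_commK; auto with kdb. }
  unfold lambda. rewrite (conj_congK _ _ h HQc), !(calB_mull b Hb).
  f_equal. apply K_mulC; auto with kdb.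
Qed.

Lemma lambda_Kg k h : K k -> lm k h = h.
Proof.
  intro Hk. unfold lambda.
  rewrite (conj_congK _ e h (lifting_K_congK Q HQ k Hk)), (calB_Kl b Hb k); auto.
  gnorm. auto.
Qed.

Lemma lambda1g h : lm e h = h.
Proof. apply lambda_Kg, K1. Qed.

Lemma lambda_swap g g' h : lm g (lm g' h) = lm g' (lm g h).
Proof. rewrite <- !lambda_mul. apply lambda_mulC. Qed.

(* λ_x(y) is y conjugated by Q(x) times an element of K; λ is trivial on K and abelian,
   so the conjugation cancels. *)
Lemma lambda_lambda x y z : lm (lm x y) z = lm y z.
Proof.
  change (lm (Q x ** y ** inv (Q x) ** b x y) z = lm y z).
  rewrite !lambda_mul, (lambda_Kg (b x y)), (lambda_swap y), <- lambda_mul, mulgV, lambda1g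
    by auto with kdb.
  auto.
Qed.

Lemma circ_assoc x y z : dt (dt x y) z = dt x (dt y z).
Proof. rewrite !circ_of_lambda, lambda_mul, lambda_lambda, lambdaM. gnorm. auto. Qed.

Definition circ_inv g := lm (inv g) (inv g).

Lemma circ_group : is_group dt e circ_inv.
Proof.
  split; [exact circ_assoc|split]; intro g; unfold circ_inv; rewrite !circ_of_lambda; split.
  - rewrite lambda1g, mul1g. auto.
  - rewrite lambdag1, mulg1. auto.
  - rewrite lambda_lambda, <- lambdaM, mulVg, lambdag1. auto.
  - rewrite <- lambda_mul, mulgV, lambda1g, mulgV. auto.
Qed.

Lemma op_inv_circ z : op_inv dt z = circ_inv z.
Proof. apply (op_inv_group _ _ _ _ circ_group). Qed.

Lemma bi_skew_brace_circ : bi_skew_brace mul dt.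
Proof.
  split; split.
  - exists e, circ_inv. apply circ_group.
  - exists e, inv. split; [exact HG|]. intros g h k.
    rewrite !circ_of_lambda, lambdaM. gnorm. auto.
  - exists e, inv. exact HG.
  - exists e, circ_inv. split; [apply circ_group|]. intros g h k.
    assert (Hcancel : forall w, lm (g ** h) (lm (inv g) w) = lm h w).
    { intro w. rewrite lambda_mulC, lambda_mul, <- (lambda_mul g), mulgV, lambda1g. auto. }
    rewrite circ_assoc, !circ_of_lambda. unfold circ_inv.
    rewrite lambda_lambda, lambdaM, !Hcancel, <- lambdaM. gnorm. auto.
Qed.

Section Step.
Variables (phi : T -> T) (a' : T -> T -> T).
Hypothesis Hphi : is_calA_lifting mul inv K A phi.
Hypothesis Ha' : is_calB mul e K a'.
#[local] Hint Resolve Hphi Ha' : kdb.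
#[local] Instance Q_congK : Proper (cK ==> cK) Q := lifting_congK Q HQ.
#[local] Instance phi_congK : Proper (cK ==> cK) phi := lifting_congK phi Hphi.

Definition step_lift g := phi g ** (Q g ** Q (phi g)).
Definition step_form g h :=
  b g h ** b (phi g) h ** commg (phi g) (Q h) ** inv (b h (phi g)) ** a' g h.

Lemma step_lift_calA : is_calA_lifting mul inv K A step_lift.
Proof.
  unfold step_lift. split; [|split].
  - intro g. auto with kdb.
  - intros g k Hk. assert (H : cK (g ** k) g) by (symmetry; apply congK_mulr; auto).
    rewrite H. reflexivity.
  - intros g h.
    rewrite (lifting_morph phi Hphi g h), (lifting_morph Q HQ g h),
      (lifting_morph Q HQ (phi g) (phi h)).
    aperm.
Qed.

Lemma step_form_calB : is_calB mul e K step_form.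
Proof.
  unfold step_form. pose proof (lifting_K_congK phi Hphi) as HphiK.
  split; [|split; [|split]].
  - intros g h. auto 10 with kdb.
  - intros g g' h. pose proof (lifting_morph phi Hphi g g') as Hm.
    rewrite (calB_congKl b Hb _ _ h Hm), (commg_congKl _ _ _ Hm), (calB_congKr b Hb h _ _ Hm).
    rewrite !(calB_mull b Hb), (calB_mulr b Hb), (calB_mull a' Ha'), commgMl; auto with kdb.
    gnorm. kperm.
  - intros g h h'.
    rewrite (commg_congKr (phi g) _ _ (lifting_morph Q HQ h h')).
    rewrite !(calB_mulr b Hb), (calB_mull b Hb), (calB_mulr a' Ha'), commgMr; auto with kdb.
    gnorm. kperm.
  - intros k g Hk. split.
    + rewrite (calB_Kl b Hb k), (calB_Kl a' Ha' k),
        (calB_congKl b Hb _ _ g (HphiK k Hk)), (calB_Kl b Hb e),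
        (commg_congKl _ _ _ (HphiK k Hk)), comm1g,
        (calB_congKr b Hb g _ _ (HphiK k Hk)), (calB_Kr b Hb e); auto with kdb.
      gnorm. auto.
    + rewrite (calB_Kr b Hb k), (calB_Kr a' Ha' k), (calB_Kl b Hb k), (calB_Kr b Hb k),
        (commg_congKr (phi g) _ _ (lifting_K_congK Q HQ k Hk)), commg1; auto.
      gnorm. auto.
Qed.

Lemma circ_step g h :
  dt (dt (dt (dt g (phi g)) h) (op_inv dt (phi g))) (a' g h) = circ_of step_lift step_form g h.
Proof.
  rewrite op_inv_circ, !circ_assoc.
  set (p := phi g). set (pb := circ_inv p).
  assert (Hpb : lm p pb = inv p).
  { apply invg_unique. rewrite <- circ_of_lambda. apply circ_group. }
  assert (Hp : A p) by (unfold p; auto with kdb).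
  rewrite !circ_of_lambda, !lambdaM.
  repeat rewrite (lambda_K _ (a' g h)) by auto with kdb.
  rewrite (lambda_swap p h pb), (lambda_swap g h), Hpb, lambdaV, <- lambda_mul.
  set (P := lm g p).
  assert (HP : cK P p).
  { unfold P, lambda. rewrite <- congK_mulr by auto with kdb. apply conjA_congK; auto with kdb. }
  assert (HPA : A P) by (apply (A_congK p); [symmetry|]; auto).
  change (lm (g ** p) h) with (Q (g ** p) ** h ** inv (Q (g ** p)) ** b (g ** p) h).
  replace (lm h (inv P)) with (inv P ** commg P (Q h) ** b h (inv P))
    by (unfold lambda, commg; gnorm; auto).
  unfold circ_of, step_lift, step_form. fold p.
  assert (HQ' : cK (p ** (Q g ** Q p)) (P ** Q (g ** p))).
  { rewrite HP, (lifting_morph Q HQ g p). reflexivity. }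
  rewrite !(mulgA g), (conj_congK _ _ h HQ').
  rewrite (calB_mull b Hb), (commg_congKl P p _ HP), (calB_invr b Hb), (calB_congKr b Hb h P p HP).
  gnorm. floatK. gnorm. strip. kperm.
Qed.
End Step.

End Lambda.

Section Xi.
Variable psi : nat -> T -> T.
Hypothesis Hpsi : forall n, 1 <= n -> is_calA_lifting mul inv K A (psi n).

Local Notation fsum L := (fold_right (fadd mul) (fzero e) L).
Definition nonempty (S : list nat) : bool := match S with [] => false | _ => true end.
Definition xi_on l := fsum (map (prod_psi psi) (filter nonempty (subsets l))).

Lemma fsum_app L1 L2 x : fsum (L1 ++ L2) x = fsum L1 x ** fsum L2 x.
Proof.
  induction L1 as [|f L1 IH]; simpl; unfold fadd, fzero in *.
  - rewrite mul1g. auto.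
  - rewrite IH, mulgA. auto.
Qed.

Lemma filter_nonempty_map_cons (a : nat) L : filter nonempty (map (cons a) L) = map (cons a) L.
Proof. induction L as [|S L IH]; simpl; auto. rewrite IH; auto. Qed.

Lemma fsum_subsets l x : fsum (map (prod_psi psi) (subsets l)) x = xi_on l x ** x.
Proof.
  induction l as [|a l IH]; unfold xi_on in *.
  - simpl. unfold fadd, fzero. gnorm. auto.
  - cbn [subsets].
    rewrite filter_app, filter_nonempty_map_cons, !map_app, !fsum_app, IH, mulgA. auto.
Qed.

Lemma fsum_comp a L x : 1 <= a ->
  cK (fsum (map (fun f => fun y => psi a (f y)) L) x) (psi a (fsum L x)).
Proof.
  intro Ha. induction L as [|f L IH]; simpl; unfold fadd, fzero in *.
  - symmetry. apply congK_K1, (lifting1_K (psi a)); auto.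
  - rewrite IH. symmetry. apply (lifting_morph (psi a)); auto.
Qed.

Lemma xi_on_cons a l x : 1 <= a -> cK (xi_on (a :: l) x) (psi a (xi_on l x) ** psi a x ** xi_on l x).
Proof.
  intro Ha. unfold xi_on at 1. cbn [subsets].
  rewrite filter_app, filter_nonempty_map_cons, map_app, fsum_app.
  replace (map (prod_psi psi) (map (cons a) (subsets l)))
    with (map (fun f => fun y => psi a (f y)) (map (prod_psi psi) (subsets l)))
    by (rewrite !map_map; reflexivity).
  rewrite fsum_comp, fsum_subsets by auto. fold (xi_on l).
  rewrite (lifting_morph (psi a) (Hpsi a Ha)). reflexivity.
Qed.

Lemma subsets_incl l S : In S (subsets l) -> incl S l.
Proof.
  revert S; induction l as [|a l IH]; simpl; intros S H.
  - destruct H as [<-|[]]. apply incl_refl.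
  - apply in_app_or in H as [H|H].
    + apply in_map_iff in H as [S' [<- H]]. apply incl_cons; [left; auto|].
      apply incl_tl; auto.
    + apply incl_tl; auto.
Qed.

Lemma xi_on_A l x : (forall j, In j l -> 1 <= j) -> A (xi_on l x).
Proof.
  intro Hl. unfold xi_on.
  assert (HL : forall f, In f (map (prod_psi psi) (filter nonempty (subsets l))) ->
                 forall y, A (f y)).
  { intros f Hf y. apply in_map_iff in Hf as [S [<- HS]].
    apply filter_In in HS as [HS Hne]. destruct S as [|j S]; [discriminate|].
    apply (lifting_A (psi j)), Hpsi, Hl, (subsets_incl l _ HS). left; auto. }
  induction (map _ _) as [|f L IH]; simpl; unfold fadd, fzero; [apply A1|].
  apply AM; [apply HL; left; auto | apply IH; intros; apply HL; right; auto].
Qed.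

Lemma xi_on_snoc l y : (forall j, In j l -> 1 <= j) -> 1 <= y ->
  forall x, cK (xi_on (l ++ [y]) x) (xi_on l x ** psi y x ** xi_on l (psi y x)).
Proof.
  intros Hl Hy. induction l as [|a l IH]; intro x.
  - unfold xi_on. simpl. unfold fadd, fzero. gnorm. reflexivity.
  - assert (Ha : 1 <= a) by (apply Hl; left; auto).
    assert (Hl' : forall j, In j l -> 1 <= j) by (intros; apply Hl; right; auto).
    specialize (IH Hl').
    assert (Hpa : Proper (cK ==> cK) (psi a)) by (apply lifting_congK; auto).
    cbn [app]. rewrite xi_on_cons, (IH x), (xi_on_cons a l x), (xi_on_cons a l (psi y x)) by auto.
    rewrite !(lifting_morph (psi a) (Hpsi a Ha)).
    assert (A (xi_on l x)) by (apply xi_on_A; auto).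
    assert (A (xi_on l (psi y x))) by (apply xi_on_A; auto).
    assert (A (psi y x)) by (apply (lifting_A (psi y)); auto).
    assert (forall z, A (psi a z)) by (intro; apply (lifting_A (psi a)); auto).
    aperm.
Qed.

Lemma xi_succ m x :
  cK (xi mul e psi (S m) x) (xi mul e psi m x ** psi (S m) x ** xi mul e psi m (psi (S m) x)).
Proof.
  change (cK (xi_on (seq 1 (S m)) x)
             (xi_on (seq 1 m) x ** psi (S m) x ** xi_on (seq 1 m) (psi (S m) x))).
  rewrite seq_S. apply xi_on_snoc; [intros j Hj; apply in_seq in Hj|]; lia.
Qed.
End Xi.

Lemma circ_is_circ_of (psi : nat -> T -> T) (alpha : nat -> T -> T -> T) :
  (forall n, 1 <= n -> is_calA_lifting mul inv K A (psi n)) ->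
  (forall n, 1 <= n -> is_calB mul e K (alpha n)) ->
  forall n, exists Q b, is_calA_lifting mul inv K A Q /\ is_calB mul e K b /\
    circ mul psi alpha n = circ_of Q b /\ (forall x, cK (Q x) (xi mul e psi n x)).
Proof.
  intros Hpsi Halpha n. induction n as [|n [Q [b [HQ [Hb [Hcirc HQxi]]]]]].
  - exists (fun _ => e), (fun _ _ => e). split; [|split; [|split]].
    + split; [|split]; intros; [apply A1 | reflexivity | rewrite mul1g; reflexivity].
    + split; [|split; [|split]]; intros; auto using K1; rewrite mul1g; auto.
    + extensionality g; extensionality h. unfold circ_of. simpl. gnorm. auto.
    + intro x. reflexivity.
  - assert (Hp : is_calA_lifting mul inv K A (psi (S n))) by (apply Hpsi; lia).
    assert (Ha : is_calB mul e K (alpha (S n))) by (apply Halpha; lia).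
    exists (step_lift Q (psi (S n))), (step_form Q b (psi (S n)) (alpha (S n))).
    split; [|split; [|split]].
    + apply step_lift_calA; auto.
    + apply step_form_calB; auto.
    + extensionality g; extensionality h. cbn [circ]. rewrite Hcirc. apply circ_step; auto.
    + intro x. rewrite xi_succ by auto. unfold step_lift.
      rewrite <- (HQxi x), <- (HQxi (psi (S n) x)).
      assert (A (psi (S n) x)) by (apply (lifting_A (psi (S n))); auto).
      assert (forall z, A (Q z)) by (intro; apply (lifting_A Q); auto).
      aperm.
Qed.

End CentralExtension.

Theorem mainTheorem6
  (T : Type) (mul : T -> T -> T) (e : T) (inv : T -> T)
  (K A : T -> Prop)
  (psi : nat -> T -> T) (alpha : nat -> T -> T -> T)
  (HG : is_group mul e inv)
  (HK : is_subgroup mul e inv K)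
  (HKZ : central mul K)
  (HA : is_subgroup mul e inv A)
  (HKA : forall x, K x -> A x)
  (HAab : abelian_mod mul inv K A)
  (Hpsi : forall n, 1 <= n -> is_calA_lifting mul inv K A (psi n))
  (Halpha : forall n, 1 <= n -> is_calB mul e K (alpha n)) :
  forall n, 1 <= n ->
    is_group_op (circ mul psi alpha n) /\
    (forall q : T -> T, lifts mul inv K A q (xi mul e psi n) ->
       exists beta, is_calB mul e K beta /\
         forall g h, circ mul psi alpha n g h =
           mul (mul (mul (mul g (q g)) h) (inv (q g))) (beta g h)) /\
    bi_skew_brace mul (circ mul psi alpha n).
Proof.
  intros n _.
  destruct (circ_is_circ_of _ _ _ _ _ _ HG HK HKZ HA HKA HAab psi alpha Hpsi Halpha n)
    as [Q [b [HQ [Hb [Hcirc HQxi]]]]].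
  rewrite Hcirc. split; [|split].
  - eexists e, _. exact (circ_group _ _ _ _ _ _ HG HK HKZ HAab _ _ HQ Hb).
  - intros q [_ Hq]. exists b. split; [exact Hb|].
    assert (HQq : forall g, congK mul inv K (Q g) (q g)).
    { pose proof (congK_Equivalence _ _ _ _ _ HG HK). intro g. rewrite HQxi. symmetry. apply Hq. }
    rewrite (circ_of_congK _ _ _ _ _ HG HKZ Q q b HQq). reflexivity.
  - exact (bi_skew_brace_circ _ _ _ _ _ _ HG HK HKZ HAab _ _ HQ Hb).
Qed.
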